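(* For every integer $n\ge 4$, $\mathrm{wdim}_2(K_n\times K_n)=n+\lceil n/3\rceil$.
   Context: $K_n\times K_n$ is the direct product of two complete graphs on $n$ vertices: vertex set $[n]\times[n]$ with $[n]=\{1,\dots,n\}$, and $(i,j)$ adjacent to $(i',j')$ iff $i\ne i'$ and $j\ne j'$. For a connected graph $G$ with distance $d_G$, vertices $x,y,z$ and $S\subseteq V(G)$, let $\Delta_z(x,y)=|d_G(x,z)-d_G(y,z)|$ and $\Delta_S(x,y)=\sum_{z\in S}\Delta_z(x,y)$. A set $S$ is a weak $k$-resolving set if $\Delta_S(x,y)\ge k$ for all distinct $x,y\in V(G)$, and $\mathrm{wdim}_k(G)$ (the weak $k$-metric dimension) is the minimum cardinality of a weak $k$-resolving set of $G$. *)

From mathcomp Require Import all_boot.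
Set Implicit Arguments. Unset Strict Implicit. Unset Printing Implicit Defensive.

Fixpoint ball (T : finType) (e : rel T) (x : T) (k : nat) : {set T} :=
  match k with
  | 0 => [set x]
  | k'.+1 => ball e x k' :|: [set y | [exists z in ball e x k', e z y]]
  end.

(* Graph distance d_G(x,y): least k with y in ball k (correct whenever y is
   reachable from x, in particular in any connected graph; every shortest
   path has length < #|T|). *)
Definition gdist (T : finType) (e : rel T) (x y : T) : nat :=
  find (fun k => y \in ball e x k) (iota 0 #|T|).

Definition absdiff (a b : nat) : nat := (a - b) + (b - a).

Definition Delta (T : finType) (e : rel T) (z x y : T) : nat :=
  absdiff (gdist e x z) (gdist e y z).

Definition DeltaS (T : finType) (e : rel T) (S : {set T}) (x y : T) : nat :=
  \sum_(z in S) Delta e z x y.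

Definition weak_resolving (T : finType) (e : rel T) (k : nat) (S : {set T}) : Prop :=
  forall x y : T, x != y -> k <= DeltaS e S x y.

Definition is_wdim (T : finType) (e : rel T) (k m : nat) : Prop :=
  (exists S : {set T}, weak_resolving e k S /\ #|S| = m) /\
  (forall S : {set T}, weak_resolving e k S -> m <= #|S|).

Definition KnxKn_adj (n : nat) : rel ('I_n * 'I_n) :=
  fun u v => (u.1 != v.1) && (u.2 != v.2).

(* Distances in K_n x K_n are 0, 1 or 2, so Delta_z(x, y) is determined by which rows
   and columns through x and y contain z.
   Upper bound: with k = floor(n/3) and k' = floor((n+1)/3), put one point on each of
   the n - k rows of index >= k and on each of the n - k' columns of index >= k', in
   cyclic positions chosen so that each of the other k rows and k' columns receives
   two points; these 2n - k - k' = n + ceil(n/3) points resolve every pair twice.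
   Lower bound: if some row of a weak 2-resolving set S is empty, every other row
   carries two points.  Otherwise let A and B count the rows and columns carrying
   exactly one point, Z the points on no such line and I the points alone on both
   their lines.  Then |S| >= 2n - A, |S| >= 2n - B and A + B + Z <= |S| + I.  Two
   isolated points would leave a pair unresolved, so I <= 1, and when I = 1 every line
   carrying exactly two points contains one of the Z points, whence
   3n <= |S| + Z + 2A and 3n <= |S| + Z + 2B.  Either way |S| >= n + ceil(n/3). *)

From mathcomp Require Import all_boot zify.
Set Implicit Arguments. Unset Strict Implicit. Unset Printing Implicit Defensive.

Section Sums.
Variables (T : finType) (S : {set T}).
Implicit Type w : T -> nat.

Lemma leq_term_sum w z : z \in S -> w z <= \sum_(x in S) w x.
Proof. by move=> Sz; rewrite (bigD1 z) //= leq_addr. Qed.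

Lemma leq_terms_sum w z1 z2 : z1 \in S -> z2 \in S -> z1 != z2 ->
  w z1 + w z2 <= \sum_(x in S) w x.
Proof.
move=> Sz1 Sz2 z12; rewrite (bigD1 z1) //= leq_add2l (bigD1 z2) /= ?leq_addr //.
by rewrite Sz2 eq_sym.
Qed.

Lemma sum_gt0_exists w : 0 < \sum_(x in S) w x -> exists2 z, z \in S & 0 < w z.
Proof.
rewrite lt0n sum_nat_eq0 => /forall_inPn[z Sz wz]; by exists z; rewrite // lt0n.
Qed.

End Sums.

Lemma DeltaC (T : finType) (e : rel T) z x y : Delta e z x y = Delta e z y x.
Proof. by rewrite /Delta /absdiff addnC. Qed.

Lemma DeltaSC (T : finType) (e : rel T) S x y : DeltaS e S x y = DeltaS e S y x.
Proof. by apply: eq_bigr => z _; rewrite DeltaC. Qed.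

Lemma DeltaS_ge2 (T : finType) (e : rel T) (S : {set T}) x y u v :
  u \in S -> v \in S -> u != v -> 0 < Delta e u x y -> 0 < Delta e v x y ->
  2 <= DeltaS e S x y.
Proof.
move=> Su Sv uv du dv.
exact: leq_trans (leq_add du dv) (leq_terms_sum (fun z => Delta e z x y) Su Sv uv).
Qed.

(* [coord false z] is the row and [coord true z] the column of [z]; the "t-line" of
   index i is the set of points with [coord t z = i].  Quantifying over [t] states each
   fact once for rows and columns. *)
Section Coordinates.
Variable n : nat.
Local Notation T := ('I_n * 'I_n)%type.

Definition coord (t : bool) (z : T) : 'I_n := if t then z.2 else z.1.

Definition mkpt (t : bool) (a b : 'I_n) : T := if t then (b, a) else (a, b).

Lemma coord_mkpt t a b : coord t (mkpt t a b) = a.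
Proof. by case: t. Qed.

Lemma coordN_mkpt t a b : coord (~~ t) (mkpt t a b) = b.
Proof. by case: t. Qed.

Lemma mkpt_coord t z : mkpt t (coord t z) (coord (~~ t) z) = z.
Proof. by case: t; case: z. Qed.

Lemma eq_coord t x z : (x == z) = (coord t x == coord t z) && (coord (~~ t) x == coord (~~ t) z).
Proof. by case: t; rewrite // andbC. Qed.

Lemma eq_mkpt t a b a' b' : (mkpt t a b == mkpt t a' b') = (a == a') && (b == b').
Proof. by rewrite (eq_coord t) !coord_mkpt !coordN_mkpt. Qed.

Definition corner t (x y : T) : T := mkpt t (coord t x) (coord (~~ t) y).

End Coordinates.

Section Distance.
Variable n : nat.
(* For n <= 2 the graph is disconnected and gdist takes junk values. *)
Hypothesis n_gt2 : 2 < n.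
Local Notation T := ('I_n * 'I_n)%type.
Local Notation e := (@KnxKn_adj n).

Lemma exists_ord_neq2 (a b : 'I_n) : exists c : 'I_n, (c != a) && (c != b).
Proof.
have : 0 < #|~: [set a; b]|.
  by have := cardsC [set a; b]; rewrite cards2 card_ord; case: (a != b) => /=; lia.
by case/card_gt0P => c; rewrite !inE negb_or; exists c.
Qed.

Lemma gdist_KnxKn (x y : T) :
  gdist e x y = if x == y then 0 else if (x.1 != y.1) && (x.2 != y.2) then 1 else 2.
Proof.
rewrite /gdist card_prod card_ord.
have -> : n * n = (n * n - 3).+3 by nia.
rewrite /= !inE (eq_sym y x).
have ball1 : [exists z in [set x], e z y] = e x y.
  by apply/existsP/idP => [[z /andP[/set1P -> //]] | exy]; exists x; rewrite set11.
rewrite ball1; case: (x =P y) => //= _.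
rewrite [e x y]/KnxKn_adj; case: ifP => //= sep; rewrite sep /=.
case: ifP => // /negbT /negP[]; apply/existsP.
have [a /andP[ax ay]] := exists_ord_neq2 x.1 y.1.
have [b /andP[bx by_]] := exists_ord_neq2 x.2 y.2.
exists (a, b); rewrite !inE /KnxKn_adj /= ay by_ !andbT.
by apply/orP; right; apply/existsP; exists x; rewrite set11 /= eq_sym ax eq_sym bx.
Qed.

Lemma gdist_coord t x z : gdist e x z =
  if x == z then 0
  else if (coord t x != coord t z) && (coord (~~ t) x != coord (~~ t) z) then 1 else 2.
Proof. by rewrite gdist_KnxKn; case: t; rewrite //= andbC. Qed.

Ltac case_coords := repeat (case: eqP => [?|?]; subst => //=); try congruence.

Lemma Delta_collinear t x y z :
  coord (~~ t) x = coord (~~ t) y -> coord t x != coord t y ->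
  Delta e z x y = if (z == x) || (z == y) then 2
                  else (coord t z == coord t x) || (coord t z == coord t y).
Proof.
rewrite /Delta /absdiff !(gdist_coord t) !(eq_coord t) => <-.
move: (coord t x) (coord t y) (coord t z) (coord (~~ t) x) (coord (~~ t) z) => i i' a j b /eqP.
case_coords.
Qed.

(* The two other corners of the rectangle spanned by x and y are equidistant from both. *)
Lemma Delta_generic t x y z :
  coord t x != coord t y -> coord (~~ t) x != coord (~~ t) y ->
  Delta e z x y = [|| coord t z == coord t x, coord t z == coord t y,
                      coord (~~ t) z == coord (~~ t) x | coord (~~ t) z == coord (~~ t) y]
                  && (z != corner t x y) && (z != corner t y x).
Proof.
rewrite /Delta /absdiff /corner !(gdist_coord t) !(eq_coord t) !coord_mkpt !coordN_mkpt.
move: (coord t x) (coord t y) (coord t z) (coord (~~ t) x) (coord (~~ t) y) (coord (~~ t) z).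
move=> i i' a j j' b /eqP ? /eqP ?; case_coords.
Qed.

End Distance.

Section ResolvingConditions.
Variables (n : nat) (S : {set 'I_n * 'I_n}) (crowded : bool -> pred 'I_n).
Hypothesis n_gt2 : 2 < n.
Hypothesis crowded_line2 : forall t i, crowded t i ->
  exists z1 z2, [/\ z1 \in S, z2 \in S, z1 != z2, coord t z1 = i & coord t z2 = i].
Hypothesis sparse_line1 : forall t i, ~~ crowded t i ->
  exists2 z, z \in S & coord t z = i /\ crowded (~~ t) (coord (~~ t) z).
Hypothesis not_doubly_crowded : forall z, z \in S -> ~~ (crowded false z.1 && crowded true z.2).
Local Notation e := (@KnxKn_adj n).

Lemma meets_line t i : exists2 z, z \in S & coord t z = i.
Proof.
have [/crowded_line2[z [_ [Sz _ _ tz _]]] | /sparse_line1[z Sz [tz _]]] := boolP (crowded t i).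
  by exists z.
by exists z.
Qed.

Lemma line_witness t c :
  (exists2 u, u \in S & coord t u = coord t c /\ u != c) \/
  [/\ c \in S, ~~ crowded t (coord t c) & crowded (~~ t) (coord (~~ t) c)].
Proof.
have [cr | ncr] := boolP (crowded t (coord t c)).
  have [z1 [z2 [Sz1 Sz2 z12 tz1 tz2]]] := crowded_line2 cr; left.
  have [z1c | z1c] := eqVneq z1 c; last by exists z1.
  by exists z2; rewrite // -z1c tz2 tz1 eq_sym.
have [z Sz [tz crz]] := sparse_line1 ncr.
by have [zc | zc] := eqVneq z c; [right; subst z | left; exists z].
Qed.

Lemma collinear_resolved t x y :
  coord (~~ t) x = coord (~~ t) y -> x != y -> 2 <= DeltaS e S x y.
Proof.
move=> xy2 xy.
have xy1 : coord t x != coord t y.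
  by apply: contraNneq xy => xy1; rewrite (eq_coord t) xy1 xy2 !eqxx.
have [u Su tu] := meets_line t (coord t x); have [v Sv tv] := meets_line t (coord t y).
have uv : u != v by apply: contraNneq xy1 => uv; rewrite -tu -tv uv.
apply: (DeltaS_ge2 Su Sv uv); rewrite (Delta_collinear n_gt2 (t := t)) // ?tu ?tv eqxx ?orbT;
  by case: ifP.
Qed.

Lemma Delta_line_corner t x y u :
  coord t x != coord t y -> coord (~~ t) x != coord (~~ t) y ->
  coord t u = coord t x -> u != corner t x y -> Delta e u x y = 1.
Proof.
move=> xy1 xy2 tu ucorner; rewrite (Delta_generic n_gt2 (t := t)) // tu eqxx ucorner /=.
suff -> : u != corner t y x by [].
by apply: contraNneq xy1 => uc; rewrite -tu uc /corner coord_mkpt.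
Qed.

Lemma crowded_notin t z : crowded t (coord t z) -> crowded (~~ t) (coord (~~ t) z) -> z \notin S.
Proof. by move=> c1 c2; apply/negP => /not_doubly_crowded; case: t c1 c2 => /= -> ->. Qed.

(* The crowded t-line through y gives one witness u.  If the t-line through x gives
   none, its corner forces the transverse line through y to be crowded too; that line
   gives a witness w, and w = u would mean y is in S on two crowded lines. *)
Lemma generic_resolved_crowded t x y :
  coord t x != coord t y -> coord (~~ t) x != coord (~~ t) y ->
  crowded t (coord t y) -> 2 <= DeltaS e S x y.
Proof.
move=> xy1 xy2 cry.
have [[u Su [tu uc]] | [_ /negP //]] := line_witness t (corner t y x); last first.
  by rewrite /corner coord_mkpt.
rewrite /corner coord_mkpt in tu.
have Du : Delta e u x y = 1 by rewrite DeltaC (Delta_line_corner (t := t)) // eq_sym.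
have [[v Sv [tv vc]] | [_ _]] := line_witness t (corner t x y).
  rewrite /corner coord_mkpt in tv.
  have uv : u != v by apply: contraNneq xy1 => uv; rewrite -tv -tu uv.
  by apply: (DeltaS_ge2 Sv Su); rewrite ?Du ?(Delta_line_corner (t := t)) // eq_sym.
rewrite /corner coordN_mkpt => cry2.
have [[w Sw [tw wc]] | [_ /negP //]] := line_witness (~~ t) (corner (~~ t) y x); last first.
  by rewrite /corner coord_mkpt.
rewrite /corner coord_mkpt in tw.
have Dw : Delta e w x y = 1.
  by rewrite DeltaC (Delta_line_corner (t := ~~ t)) // ?negbK // eq_sym.
have uw : u != w.
  apply/eqP => uw; have /negP[] := crowded_notin cry cry2.
  suff -> : y = u by [].
  by apply/eqP; rewrite (eq_coord t) tu uw tw !eqxx.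
by apply: (DeltaS_ge2 Su Sw); rewrite ?Du ?Dw.
Qed.

Lemma generic_resolved x y : x.1 != y.1 -> x.2 != y.2 -> 2 <= DeltaS e S x y.
Proof.
move=> xy1 xy2.
have [cry | ncry] := boolP (crowded true y.2).
  exact: (generic_resolved_crowded (t := true)).
have [crx | ncrx] := boolP (crowded true x.2).
  by rewrite DeltaSC; apply: (generic_resolved_crowded (t := true)); rewrite // eq_sym.
have row_witness w v : ~~ crowded true v.2 ->
    exists2 u, u \in S & coord false u = coord false w /\ u != corner false w v.
  move=> ncv; case: (line_witness false (corner false w v)) => [[u Su [wu uc]] | [_ _ crv]].
    by exists u.
  by rewrite crv in ncv.
have [u Su [xu ux]] := row_witness x y ncry; have [v Sv [yv vy]] := row_witness y x ncrx.
have uv : u != v by apply: contraNneq xy1 => uv; rewrite -[x.1]xu -[y.1]yv uv.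
apply: (DeltaS_ge2 Su Sv uv); last rewrite DeltaC;
  by rewrite (Delta_line_corner (t := false)) // eq_sym.
Qed.

Lemma resolving_of_conditions : weak_resolving e 2 S.
Proof.
move=> x y xy.
have [xy1 | xy1] := eqVneq x.1 y.1; first exact: (collinear_resolved (t := true)).
have [xy2 | xy2] := eqVneq x.2 y.2; first exact: (collinear_resolved (t := false)).
exact: generic_resolved.
Qed.

End ResolvingConditions.

Lemma card_ord_geq n k : #|[set i : 'I_n | k <= i]| = n - k.
Proof.
rewrite -sum1dep_card -[RHS]muln1 -sum_nat_const_nat big_geq_mkord.
by apply: eq_bigl => i.
Qed.

Section Construction.
Variables (n : nat) (k : bool -> nat).
Hypotheses (k_gt0 : forall t, 0 < k t) (k_fit : forall t, k (~~ t) + 2 * k t <= n).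
Local Notation T := ('I_n * 'I_n)%type.

(* The t-line of index i >= k t carries one point, at position (i - k t) mod k (~~ t);
   as i ranges over the n - k t >= 2 k (~~ t) such indices, every transverse line of
   index < k (~~ t) is hit at least twice. *)
Definition cyclic_diag t (z : T) : bool :=
  (k t <= coord t z) && (coord (~~ t) z == (coord t z - k t) %% k (~~ t) :> nat).

Definition diag_set : {set T} := [set z | cyclic_diag false z || cyclic_diag true z].

Lemma mem_diag_set t z : cyclic_diag t z -> z \in diag_set.
Proof. by rewrite inE; case: t => ->; rewrite ?orbT. Qed.

Let n_gt0 : 0 < n.
Proof. by have := k_fit true; have := k_gt0 true; lia. Qed.

Let ord (m : nat) : 'I_n := insubd (Ordinal n_gt0) m.

Let val_ord m : m < n -> val (ord m) = m.
Proof. by move=> lt_mn; rewrite val_insubd lt_mn. Qed.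

Lemma diag_set_crowded t (i : 'I_n) : i < k t ->
  exists z1 z2, [/\ z1 \in diag_set, z2 \in diag_set, z1 != z2, coord t z1 = i & coord t z2 = i].
Proof.
move=> lt_ik; have := k_fit t => fit.
have diag m : k (~~ t) + m < n -> m %% k t = i -> mkpt t i (ord (k (~~ t) + m)) \in diag_set.
  move=> lt_mn mod_m; apply: (mem_diag_set (t := ~~ t)).
  by rewrite /cyclic_diag negbK coordN_mkpt coord_mkpt val_ord // addKn mod_m leq_addr eqxx.
exists (mkpt t i (ord (k (~~ t) + i))), (mkpt t i (ord (k (~~ t) + (k t + i)))).
split; rewrite ?coord_mkpt //.
- by apply: diag; rewrite ?modn_small //; lia.
- by apply: diag; rewrite ?modnDl ?modn_small //; lia.
- apply/eqP => /(congr1 (val \o coord (~~ t))) /=; move: (k_gt0 t).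
  by rewrite !coordN_mkpt !val_ord; lia.
Qed.

Lemma diag_set_sparse t (i : 'I_n) : ~~ (i < k t) ->
  exists2 z, z \in diag_set & coord t z = i /\ coord (~~ t) z < k (~~ t).
Proof.
rewrite -leqNgt => le_ki.
have lt_mod : (i - k t) %% k (~~ t) < k (~~ t) by rewrite ltn_pmod.
have v : val (ord ((i - k t) %% k (~~ t))) = (i - k t) %% k (~~ t).
  by apply: val_ord; have := k_fit t; lia.
exists (mkpt t i (ord ((i - k t) %% k (~~ t)))); last by rewrite coord_mkpt coordN_mkpt v.
by apply: (mem_diag_set (t := t)); rewrite /cyclic_diag coord_mkpt coordN_mkpt v le_ki eqxx.
Qed.

Lemma diag_set_free z : z \in diag_set -> ~~ ((z.1 < k false) && (z.2 < k true)).
Proof.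
by rewrite inE /cyclic_diag /= => /orP[] /andP[le _]; rewrite negb_and -!leqNgt le ?orbT.
Qed.

Lemma card_cyclic_diag t : #|[set z | cyclic_diag t z]| <= n - k t.
Proof.
rewrite -card_ord_geq; pose f i := mkpt t i (ord ((i - k t) %% k (~~ t))).
apply: leq_trans (leq_imset_card f _); apply/subset_leq_card/subsetP => z.
rewrite inE => /andP[le_kz /eqP diag]; apply/imsetP; exists (coord t z); first by rewrite inE.
rewrite -{1}(mkpt_coord t z); congr mkpt; apply: val_inj.
by rewrite val_ord -diag.
Qed.

Lemma card_diag_set : #|diag_set| <= (n - k false) + (n - k true).
Proof.
have -> : diag_set = [set z | cyclic_diag false z] :|: [set z | cyclic_diag true z].
  by apply/setP => z; rewrite !inE.
by apply: leq_trans (leq_card_setU _ _) _; apply: leq_add; apply: card_cyclic_diag.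
Qed.

Hypothesis n_gt2 : 2 < n.

Lemma diag_set_resolving : weak_resolving (@KnxKn_adj n) 2 diag_set.
Proof.
apply: (resolving_of_conditions (crowded := fun t i => i < k t)) => //.
- exact: diag_set_crowded.
- exact: diag_set_sparse.
- exact: diag_set_free.
Qed.

End Construction.

Lemma exists_superset_card (T : finType) (A : {set T}) m :
  #|A| <= m <= #|T| -> exists2 B : {set T}, A \subset B & #|B| = m.
Proof.
move=> /andP[]; move: {2}(m - #|A|) (erefl (m - #|A|)) => d.
elim: d A => [|d IH] A dA le_Am le_mT; first by exists A => //; lia.
have : 0 < #|~: A| by have := cardsC A; lia.
case/card_gt0P => x; rewrite inE => Ax.
have [|||B sub cardB] := IH (x |: A); rewrite ?cardsU1 ?Ax //; try lia.
by exists B => //; apply: subset_trans sub; apply: subsetUr.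
Qed.

Lemma weak_resolvingS (T : finType) (e : rel T) k (A B : {set T}) :
  A \subset B -> weak_resolving e k A -> weak_resolving e k B.
Proof.
move=> sAB resA x y xy; apply: leq_trans (resA x y xy) _.
by rewrite /DeltaS [X in _ <= X](big_setID A) /= (setIidPr sAB) leq_addr.
Qed.

Lemma wdim2_upper n : 3 < n ->
  exists S, weak_resolving (@KnxKn_adj n) 2 S /\ #|S| = n + (n + 2) %/ 3.
Proof.
move=> n_gt3; pose k t := if t then (n + 1) %/ 3 else n %/ 3.
have k_gt0 t : 0 < k t by case: t; rewrite /k; lia.
have k_fit t : k (~~ t) + 2 * k t <= n by case: t; rewrite /k /=; lia.
have [|S sub cardS] := @exists_superset_card _ (diag_set n k) (n + (n + 2) %/ 3).
  have := card_diag_set k_gt0 k_fit; rewrite card_prod card_ord /k /=.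
  by move=> le_card; apply/andP; split; nia.
exists S; split => //; apply: weak_resolvingS sub _; apply: diag_set_resolving => //; lia.
Qed.

Section LowerBound.
Variables (n : nat) (S : {set 'I_n * 'I_n}).
Local Notation T := ('I_n * 'I_n)%type.
Local Notation e := (@KnxKn_adj n).

Definition line_count t i := \sum_(z in S) (coord t z == i).

Definition lonely t z := line_count t (coord t z) == 1.

Definition isolated z := lonely false z && lonely true z.

Definition shared z := ~~ lonely false z && ~~ lonely true z.

Lemma isolatedE t z : isolated z = lonely t z && lonely (~~ t) z.
Proof. by case: t; rewrite // andbC. Qed.

Lemma sharedE t z : shared z = ~~ lonely t z && ~~ lonely (~~ t) z.
Proof. by case: t; rewrite // andbC. Qed.

Lemma lonely_uniq t z1 z : z1 \in S -> lonely t z1 -> z \in S ->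
  coord t z = coord t z1 -> z = z1.
Proof.
move=> Sz1 /eqP cnt1 Sz tz; apply/eqP; apply: contraT => zz1.
have := leq_terms_sum (fun x => (coord t x == coord t z1) : nat) Sz Sz1 zz1.
by rewrite -/(line_count t (coord t z1)) cnt1 tz eqxx.
Qed.

Lemma lonely_neq t z1 z : z1 \in S -> lonely t z1 -> z \in S -> z != z1 ->
  (coord t z == coord t z1) = false.
Proof. by move=> Sz1 lz1 Sz; apply: contraNF => /eqP /(lonely_uniq Sz1 lz1 Sz) ->. Qed.

Lemma empty_line_notin t i z : line_count t i = 0 -> z \in S -> coord t z != i.
Proof.
by move=> /eqP; rewrite sum_nat_eq0 => /forall_inP cnt0 /cnt0; rewrite eqb0.
Qed.

Lemma sum_over_lines t (F : T -> nat) :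
  \sum_(z in S) F z = \sum_(i < n) \sum_(z in S | coord t z == i) F z.
Proof. exact: partition_big. Qed.

Lemma line_countE t i : line_count t i = \sum_(z in S | coord t z == i) 1.
Proof. by rewrite big_mkcondr; apply: eq_bigr => z _; case: eqP. Qed.

Lemma card_line_count t : #|S| = \sum_(i < n) line_count t i.
Proof.
by rewrite -sum1_card (sum_over_lines t); apply: eq_bigr => i _; rewrite line_countE.
Qed.

Lemma sum_lonely t : \sum_(z in S) lonely t z = \sum_(i < n) (line_count t i == 1).
Proof.
rewrite (sum_over_lines t); apply: eq_bigr => i _.
rewrite (eq_bigr (fun=> 1 * (line_count t i == 1))) => [|z /andP[_ /eqP tz]]; last first.
  by rewrite /lonely tz mul1n.
by rewrite -big_distrl /= -line_countE; case: eqP => [->|]; rewrite ?muln0.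
Qed.

Lemma card_ge_lonely_lines t : (forall i, 0 < line_count t i) ->
  2 * n <= #|S| + \sum_(i < n) (line_count t i == 1).
Proof.
move=> cnt_gt0; rewrite (card_line_count t) -big_split /=.
apply: (@leq_trans (\sum_(i < n) 2)); first by rewrite sum_nat_const card_ord mulnC.
by apply: leq_sum => i _; have := cnt_gt0 i; case: eqP; lia.
Qed.

Lemma sum_lonely_shared :
  \sum_(i < n) (line_count false i == 1) + \sum_(i < n) (line_count true i == 1)
    + \sum_(z in S) shared z <= #|S| + \sum_(z in S) isolated z.
Proof.
rewrite -!sum_lonely -sum1_card -!big_split /=; apply: leq_sum => z _.
by rewrite /shared /isolated; case: (lonely false z); case: (lonely true z).
Qed.

Hypotheses (n_gt2 : 2 < n) (S_res : weak_resolving e 2 S).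

Lemma empty_line_neighbor t i i' : line_count t i = 0 -> i' != i -> 2 <= line_count t i'.
Proof.
move=> cnt0 i'i; rewrite leqNgt; apply/negP => cnt1.
have [j Sj] : exists j, mkpt t i' j \notin S.
  have [c /andP[ci' _]] := exists_ord_neq2 n_gt2 i' i'.
  have [S1|] := boolP (mkpt t i' i' \in S); last by exists i'.
  have [S2|] := boolP (mkpt t i' c \in S); last by exists c.
  have := leq_terms_sum (fun z => (coord t z == i') : nat) S1 S2.
  rewrite -/(line_count t i') !coord_mkpt eqxx eq_mkpt eqxx /= eq_sym ci'.
  by move=> /(_ isT); lia.
have xy : mkpt t i j != mkpt t i' j by rewrite eq_mkpt eq_sym (negbTE i'i).
suff : DeltaS e S (mkpt t i j) (mkpt t i' j) <= line_count t i + line_count t i'.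
  by have := S_res xy; rewrite cnt0; lia.
rewrite /DeltaS -big_split; apply: leq_sum => z Sz /=.
have ii' : i != i' by rewrite eq_sym.
rewrite (Delta_collinear n_gt2 (t := t)) ?coordN_mkpt ?coord_mkpt //.
have -> : z == mkpt t i j = false.
  by apply: contraTF (empty_line_notin cnt0 Sz) => /eqP ->; rewrite coord_mkpt negbK.
have -> /= : z == mkpt t i' j = false by apply: contraNF Sj => /eqP <-.
by case: (coord t z == i); case: (coord t z == i').
Qed.

Lemma card_ge_empty_line t i : line_count t i = 0 -> 2 * (n - 1) <= #|S|.
Proof.
move=> cnt0; rewrite (card_line_count t) (bigD1 i) //= cnt0 add0n.
apply: (@leq_trans (\sum_(i' < n | i' != i) 2)).
  by rewrite sum_nat_const cardC1 card_ord; lia.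
by apply: leq_sum => i' i'i; apply: empty_line_neighbor cnt0 i'i.
Qed.

Lemma isolated_uniq z1 z2 : z1 \in S -> z2 \in S -> isolated z1 -> isolated z2 -> z1 = z2.
Proof.
rewrite !(isolatedE false) => S1 S2 /andP[r1 c1] /andP[r2 c2]; apply/eqP/contraT => z12.
have sep t : lonely t z1 -> coord t z1 != coord t z2.
  by move=> l1; rewrite eq_sym (lonely_neq S1 l1 S2) // eq_sym.
have sep1 := sep _ r1; have sep2 : coord (~~ false) z2 != coord (~~ false) z1.
  by rewrite eq_sym; apply: sep.
pose x := mkpt false (coord false z1) (coord (~~ false) z2).
pose y := mkpt false (coord false z2) (coord (~~ false) z1).
have xy : x != y by rewrite eq_mkpt (negbTE sep1).
have := S_res xy; rewrite /DeltaS big1 // => z Sz.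
rewrite (Delta_generic n_gt2 (t := false)) /corner ?coord_mkpt ?coordN_mkpt ?mkpt_coord //.
have [-> | zz1] := eqVneq z z1; first by rewrite eqxx andbF.
have [-> | zz2] := eqVneq z z2; first by rewrite eqxx andbF.
rewrite (lonely_neq S1 r1 Sz zz1) (lonely_neq S2 r2 Sz zz2).
by rewrite (lonely_neq (t := ~~ false) S1 c1 Sz zz1) (lonely_neq (t := ~~ false) S2 c2 Sz zz2).
Qed.

Lemma sum_isolated_le1 : \sum_(z in S) isolated z <= 1.
Proof.
have [s0 /andP[S0 iso0] | no_iso] := pickP [pred z in S | isolated z]; last first.
  by rewrite big1 // => z Sz; have := no_iso z; rewrite /= Sz /= => ->.
rewrite (bigD1 s0) //= iso0 big1 // => z /andP[Sz zs0].
by apply/eqP; rewrite eqb0; apply: contra zs0 => isoz; rewrite (isolated_uniq Sz S0 isoz iso0).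
Qed.

(* If the line k carries exactly two points, neither shared, take one of them, u; the
   pair with corners s0 and u is then resolved by the other point of line k alone. *)
Lemma line_excess t s0 k : s0 \in S -> isolated s0 -> 0 < line_count t k ->
  3 <= line_count t k + \sum_(z in S | coord t z == k) shared z + 2 * (line_count t k == 1).
Proof.
move=> S0 iso0 cnt_gt0.
have [/eqP -> | cnt_ne1] := boolP (line_count t k == 1); first by lia.
have [shared0 | ] := posnP (\sum_(z in S | coord t z == k) shared z); last by lia.
have [cnt_gt2 | cnt_le2] := ltnP 2 (line_count t k); first by lia.
have cnt2 : line_count t k = 2 by move/eqP: cnt_ne1; lia.
exfalso.
have [u Su] := sum_gt0_exists cnt_gt0; rewrite lt0b => /eqP tu.
have lu : lonely (~~ t) u.
  move/eqP: shared0; rewrite sum_nat_eq0 => /forall_inP /(_ u).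
  by rewrite Su tu eqxx (sharedE t) /lonely tu (negbTE cnt_ne1) eqb0 negbK => /(_ isT).
move: iso0; rewrite (isolatedE t) => /andP[l0 l0'].
have ks0 : coord t s0 != k by apply: contraNneq cnt_ne1 => <-.
have us0 : u != s0 by apply: contraNneq ks0 => <-; rewrite tu.
have us0' : coord (~~ t) u != coord (~~ t) s0 by rewrite (lonely_neq S0 l0').
pose x := mkpt t (coord t s0) (coord (~~ t) u); pose y := mkpt t k (coord (~~ t) s0).
have xy : x != y by rewrite eq_mkpt (negbTE ks0).
have := S_res xy; apply/negP; rewrite -ltnNge.
suff : DeltaS e S x y + \sum_(z in S) (z == u) <= line_count t k.
  by have := leq_term_sum (fun z => (z == u) : nat) Su; rewrite eqxx cnt2; lia.
rewrite /DeltaS -big_split; apply: leq_sum => z Sz /=.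
rewrite (Delta_generic n_gt2 (t := t)) /corner ?coord_mkpt ?coordN_mkpt ?mkpt_coord //.
rewrite -tu mkpt_coord.
have [-> | zu] := eqVneq z u; first by rewrite eqxx !andbF.
have [-> | zs0] := eqVneq z s0; first by rewrite andbF.
rewrite (lonely_neq S0 l0 Sz zs0) (lonely_neq S0 l0' Sz zs0) (lonely_neq Su lu Sz zu).
by rewrite !orbF !andbT addn0.
Qed.

Lemma card_ge_excess t s0 : s0 \in S -> isolated s0 -> (forall i, 0 < line_count t i) ->
  3 * n <= #|S| + \sum_(z in S) shared z + 2 * \sum_(i < n) (line_count t i == 1).
Proof.
move=> S0 iso0 cnt_gt0.
rewrite (card_line_count t) (sum_over_lines t) big_distrr -!big_split /=.
apply: (@leq_trans (\sum_(i < n) 3)); first by rewrite sum_nat_const card_ord mulnC.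
by apply: leq_sum => i _; apply: line_excess S0 iso0 (cnt_gt0 i).
Qed.

End LowerBound.

Lemma wdim2_lower n (S : {set 'I_n * 'I_n}) : 3 < n -> weak_resolving (@KnxKn_adj n) 2 S ->
  n + (n + 2) %/ 3 <= #|S|.
Proof.
move=> n_gt3 S_res; have n_gt2 := ltnW n_gt3.
have [[t [i cnt0]] | cnt_gt0] :
    (exists t i, line_count S t i = 0) \/ forall t i, 0 < line_count S t i.
  have [[t i] /eqP cnt0 | none] := pickP (fun p : bool * 'I_n => line_count S p.1 p.2 == 0).
    by left; exists t, i.
  by right => t i; rewrite lt0n; apply/negbT; apply: (none (t, i)).
  by have := card_ge_empty_line n_gt2 S_res cnt0; lia.
have := sum_lonely_shared S; have := sum_isolated_le1 n_gt2 S_res.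
have := card_ge_lonely_lines (cnt_gt0 false); have := card_ge_lonely_lines (cnt_gt0 true).
have [-> | /sum_gt0_exists[s0 S0]] := posnP (\sum_(z in S) isolated S z); first by lia.
rewrite lt0b => iso0.
have := card_ge_excess n_gt2 S_res S0 iso0 (cnt_gt0 false).
have := card_ge_excess n_gt2 S_res S0 iso0 (cnt_gt0 true).
lia.
Qed.

Theorem mainTheorem3 (n : nat) (hn : 4 <= n) :
  is_wdim (@KnxKn_adj n) 2 (n + (n + 2) %/ 3).
Proof.
split; first exact: wdim2_upper.
by move=> S; apply: wdim2_lower.
Qed.
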